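(* A regulator splits new bandwidth $B\ge 0$ between two SPs as $B_1^n,B_2^n\ge0$ with $B_1^n+B_2^n=B$; SP $i$ then has total bandwidth $B_i=B_i^o+B_i^n$ and must satisfy $B_{i,S}\ge B_{i,S}^0:=B_i^n$. For this split, let $\mathrm{SW}_{\mathrm{wo}}^*$ be the maximal social welfare over all allocations with $B_{i,S}\in[0,B_i]$; $\mathrm{SW}_{\mathrm{w}}^*$ the maximal social welfare over allocations with $B_{i,S}\in[B_i^n,B_i]$; and $\mathrm{SW}_{\mathrm{w}}^{\mathrm{NE}}$ the social welfare at the unique Nash equilibrium of the constrained two-SP bandwidth game. Let $T=\frac{(B_1^o+B_2^o)N_f\epsilon}{N_m}$. Then: 1. If $B>T$, then $\mathrm{SW}_{\mathrm{w}}^{\mathrm{NE}}\le\mathrm{SW}_{\mathrm{w}}^*<\mathrm{SW}_{\mathrm{wo}}^*$, and $\mathrm{SW}_{\mathrm{w}}^{\mathrm{NE}}=\mathrm{SW}_{\mathrm{w}}^*$ if and only if $\frac{\partial S_i}{\partial B_{i,S}}\le 0$ for $i=1,2$ when evaluated at the profile $(B_{1,S},B_{2,S})=(B_1^n,B_2^n)$, i.e. iff for $i=1,2$ $$\lambda_S(R_S^0)^{-\alpha}-(R_M^0)^{-\alpha}-\frac{\alpha\lambda_S^2B_i^nR_0}{N_f}(R_S^0)^{-\alpha-1}+\frac{\alpha B_i^oR_0}{N_m}(R_M^0)^{-\alpha-1}\le 0,$$ where $R_S^0=\frac{\lambda_S(B_1^n+B_2^n)R_0}{N_f}$ and $R_M^0=\frac{(B_1^o+B_2^o)R_0}{N_m}$.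 2. If $B\le T$, then $\mathrm{SW}_{\mathrm{w}}^{\mathrm{NE}}\le\mathrm{SW}_{\mathrm{w}}^*=\mathrm{SW}_{\mathrm{wo}}^*$, and $\mathrm{SW}_{\mathrm{w}}^{\mathrm{NE}}=\mathrm{SW}_{\mathrm{wo}}^*$ if and only if $$B_1^n\in\Big[B-\frac{B_2^oN_f\epsilon}{N_m},\ \frac{B_1^oN_f\epsilon}{N_m}\Big],\qquad B_2^n=B-B_1^n.$$
   Context: Fixed parameters: $\alpha\in(0,1)$; densities $N_m>0$ (mobile users) and $N_f>0$ (fixed users); spectral efficiency $R_0>0$; common small-cell density $\lambda_S>1$ (macro density normalized to 1); initial bandwidths $B_1^o,B_2^o>0$, usable for either macro- or small-cells; the new bandwidth may be used only for small-cells. Utility $u(r)=\frac{r^{1-\alpha}}{1-\alpha}$, $u'(r)=r^{-\alpha}$. Let $\epsilon=\lambda_S^{1/\alpha-1}$. Two-SP bandwidth game with totals $B_i$ and lower bounds $B_{i,S}^0$: SP $i$ chooses $B_{i,S}\in[B_{i,S}^0,B_i]$, $B_{i,M}=B_i-B_{i,S}$; average rates at market-clearing prices (mobile users on macro-cells, fixed users on small-cells) are $R_S=\frac{\lambda_S(B_{1,S}+B_{2,S})R_0}{N_f}$, $R_M=\frac{(B_{1,M}+B_{2,M})R_0}{N_m}$; SP $i$'s revenue is $S_i=R_0B_{i,M}R_M^{-\alpha}+R_0\lambda_SB_{i,S}R_S^{-\alpha}$ (zero-bandwidth terms are $0$). This game has a unique pure Nash equilibrium. Social welfare of a profile is $\mathrm{SW}=N_m\,u(R_M)+N_f\,u(R_S)$.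 *)

From Stdlib Require Import Reals Lra.
Open Scope R_scope.

(* r^a for r > 0; convention: value 0 when r <= 0.  It is only applied
   (i) with a = 1 - alpha > 0 (utility, where 0^(1-alpha) = 0 is the true value),
   (ii) with a = -alpha, always multiplied by a bandwidth, so that
        zero-bandwidth revenue terms are 0 as in the paper. *)
Definition rpow (r a : R) : R := if Rlt_dec 0 r then Rpower r a else 0.

Definition u (alpha r : R) : R := rpow r (1 - alpha) / (1 - alpha).

Definition eps (alpha lamS : R) : R := Rpower lamS (1 / alpha - 1).

(* Average rates for a profile; x1 x2 = small-cell bandwidths B_{i,S},
   B1 B2 = total bandwidths B_i, so B_{i,M} = B_i - x_i. *)
Definition RS (Nf R0 lamS x1 x2 : R) : R := lamS * (x1 + x2) * R0 / Nf.
Definition RM (Nm R0 B1 B2 x1 x2 : R) : R := ((B1 - x1) + (B2 - x2)) * R0 / Nm.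

Definition SW (alpha Nm Nf R0 lamS B1 B2 x1 x2 : R) : R :=
  Nm * u alpha (RM Nm R0 B1 B2 x1 x2) + Nf * u alpha (RS Nf R0 lamS x1 x2).

Definition S1 (alpha Nm Nf R0 lamS B1 B2 x1 x2 : R) : R :=
  R0 * (B1 - x1) * rpow (RM Nm R0 B1 B2 x1 x2) (- alpha)
  + R0 * lamS * x1 * rpow (RS Nf R0 lamS x1 x2) (- alpha).
Definition S2 (alpha Nm Nf R0 lamS B1 B2 x1 x2 : R) : R :=
  R0 * (B2 - x2) * rpow (RM Nm R0 B1 B2 x1 x2) (- alpha)
  + R0 * lamS * x2 * rpow (RS Nf R0 lamS x1 x2) (- alpha).

Definition feasible (B1 B2 l1 l2 x1 x2 : R) : Prop :=
  l1 <= x1 <= B1 /\ l2 <= x2 <= B2.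

Definition is_max_SW (alpha Nm Nf R0 lamS B1 B2 l1 l2 M : R) : Prop :=
  (exists x1 x2, feasible B1 B2 l1 l2 x1 x2 /\
                 SW alpha Nm Nf R0 lamS B1 B2 x1 x2 = M) /\
  (forall x1 x2, feasible B1 B2 l1 l2 x1 x2 ->
                 SW alpha Nm Nf R0 lamS B1 B2 x1 x2 <= M).

Definition isNE (alpha Nm Nf R0 lamS B1 B2 l1 l2 x1 x2 : R) : Prop :=
  feasible B1 B2 l1 l2 x1 x2 /\
  (forall y, l1 <= y <= B1 ->
     S1 alpha Nm Nf R0 lamS B1 B2 y x2 <= S1 alpha Nm Nf R0 lamS B1 B2 x1 x2) /\
  (forall y, l2 <= y <= B2 ->
     S2 alpha Nm Nf R0 lamS B1 B2 x1 y <= S2 alpha Nm Nf R0 lamS B1 B2 x1 x2).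

(* The marginal-revenue expression dS_i/dB_{i,S} at (B_1^n, B_2^n), as in the paper. *)
Definition dSi (alpha Nm Nf R0 lamS B1o B2o B1n B2n Bio Bin : R) : R :=
  let RS0 := lamS * (B1n + B2n) * R0 / Nf in
  let RM0 := (B1o + B2o) * R0 / Nm in
  lamS * Rpower RS0 (- alpha) - Rpower RM0 (- alpha)
  - alpha * lamS ^ 2 * Bin * R0 / Nf * Rpower RS0 (- alpha - 1)
  + alpha * Bio * R0 / Nm * Rpower RM0 (- alpha - 1).

From Pilot Require Import Defs.
From Stdlib Require Import Reals Lra.
From Coquelicot Require Import Coquelicot.
Open Scope R_scope.

(* Social welfare depends on a profile only through the total small-cell bandwidth s, and as a
   function of s it is strictly concave, maximal where the marginal welfare
   lamS (lamS s R0 / Nf)^-a - ((Bt - s) R0 / Nm)^-a vanishes, i.e. at s = kappa (Bt - s) with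
   kappa = Nf eps / Nm.  The threshold T is kappa times the old bandwidth, so B <= T says exactly
   that the forced small-cell bandwidth B does not exceed this optimum; otherwise the constrained
   optimum sits at s = B.
   The two SPs' marginal revenues add up to (2 - a) times the marginal welfare.  Together with the
   first-order conditions of an equilibrium (corners are excluded because the price r^-a blows up
   on an empty band) this pins down the equilibrium total: above the optimum, the equilibrium is the
   lower-bound profile iff both marginal revenues there are nonpositive; below it, the equilibrium
   total is optimal iff B_i^n <= kappa B_i^o for both SPs. *)

Lemma Rpower_gt0 x a : 0 < Rpower x a.
Proof. exact (exp_pos _). Qed.

Lemma Rpower_opp_lt x y a : 0 < x -> x < y -> 0 < a -> Rpower y (- a) < Rpower x (- a).
Proof.
  intros Hx Hxy Ha; rewrite !Rpower_Ropp.
  apply Rinv_lt_contravar; [apply Rmult_lt_0_compat; apply Rpower_gt0|].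
  apply Rlt_Rpower_l; lra.
Qed.

Lemma Rpower_opp_le x y a : 0 < x -> x <= y -> 0 < a -> Rpower y (- a) <= Rpower x (- a).
Proof.
  intros Hx [Hxy | <-] Ha; [left; apply Rpower_opp_lt; assumption | lra].
Qed.

Lemma Rpower_opp_unbounded a c H K : 0 < a -> 0 < c -> 0 < H ->
  exists h, 0 < h <= H /\ K < Rpower (h * c) (- a).
Proof.
  intros Ha Hc HH; set (K' := Rmax K 0 + 1).
  assert (HK : K < K' /\ 0 < K') by (unfold K'; generalize (Rmax_l K 0) (Rmax_r K 0); lra).
  set (z0 := Rpower K' (- (1 / a))).
  assert (Hz0 : 0 < z0) by apply Rpower_gt0.
  assert (E : Rpower z0 (- a) = K').
  { unfold z0; rewrite Rpower_mult; replace (- (1 / a) * - a) with 1 by (field; lra).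
    apply Rpower_1; lra. }
  exists (Rmin H (z0 / c)).
  assert (Hm : 0 < Rmin H (z0 / c)) by (apply Rmin_glb_lt; [|apply Rdiv_lt_0_compat]; lra).
  split; [split; [lra | apply Rmin_l]|].
  apply Rlt_le_trans with K'; [lra|]; rewrite <- E.
  apply Rpower_opp_le; [nra | | lra].
  replace z0 with (z0 / c * c) at 2 by (field; lra).
  apply Rmult_le_compat_r; [lra | apply Rmin_r].
Qed.

Lemma rpow_of_pos x a : 0 < x -> rpow x a = Rpower x a.
Proof. unfold rpow; destruct (Rlt_dec 0 x); lra. Qed.

Lemma rpow_of_nonpos x a : x <= 0 -> rpow x a = 0.
Proof. unfold rpow; destruct (Rlt_dec 0 x); lra. Qed.

Lemma Rpower_sub1 r a : 0 < r -> Rpower r (a - 1) = Rpower r a / r.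
Proof.
  intros Hr; unfold Rminus; rewrite Rpower_plus, Rpower_Ropp, Rpower_1 by lra.
  reflexivity.
Qed.

Lemma rpow_tangent_lt b r r0 : 0 < b < 1 -> 0 < r0 -> 0 <= r -> r <> r0 ->
  rpow r b < Rpower r0 b + b * Rpower r0 (b - 1) * (r - r0).
Proof.
  intros Hb Hr0 [Hr | <-] Hne.
  - rewrite rpow_of_pos by exact Hr.
    assert (D : forall c, 0 < c -> derivable_pt_lim (fun x => Rpower x b) c (b * Rpower c (b - 1)))
      by (intros; apply derivable_pt_lim_power; assumption).
    assert (Hdecr : forall c d, 0 < c < d -> b * Rpower d (b - 1) < b * Rpower c (b - 1)).
    { intros c d Hcd; apply Rmult_lt_compat_l; [lra|].
      replace (b - 1) with (- (1 - b)) by ring; apply Rpower_opp_lt; lra. }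
    destruct (Rlt_dec r r0) as [Hlt | Hge].
    + destruct (MVT_cor2 _ _ r r0 Hlt (fun c Hc => D c ltac:(lra))) as [c [Hc Hcr]].
      specialize (Hdecr c r0 ltac:(lra)); nra.
    + destruct (MVT_cor2 _ _ r0 r ltac:(lra) (fun c Hc => D c ltac:(lra))) as [c [Hc Hcr]].
      specialize (Hdecr r0 c ltac:(lra)); nra.
  - rewrite rpow_of_nonpos, Rpower_sub1 by lra.
    assert (0 < Rpower r0 b) by apply Rpower_gt0.
    replace (b * (Rpower r0 b / r0) * (0 - r0)) with (- b * Rpower r0 b) by (field; lra).
    nra.
Qed.

Lemma u_tangent_lt a r r0 : 0 < a < 1 -> 0 < r0 -> 0 <= r -> r <> r0 ->
  u a r < u a r0 + Rpower r0 (- a) * (r - r0).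
Proof.
  intros Ha Hr0 Hr Hne; unfold u.
  pose proof (rpow_tangent_lt (1 - a) r r0 ltac:(lra) Hr0 Hr Hne) as H.
  rewrite (rpow_of_pos r0) by exact Hr0.
  replace (1 - a - 1) with (- a) in H by ring.
  apply Rmult_lt_reg_r with (1 - a); [lra|].
  replace ((Rpower r0 (1 - a) / (1 - a) + Rpower r0 (- a) * (r - r0)) * (1 - a))
    with (Rpower r0 (1 - a) + (1 - a) * Rpower r0 (- a) * (r - r0)) by (field; lra).
  replace (rpow r (1 - a) / (1 - a) * (1 - a)) with (rpow r (1 - a)) by (field; lra).
  exact H.
Qed.

Lemma derivable_pt_lim_max_left f x d lo : derivable_pt_lim f x d -> lo < x ->
  (forall y, lo <= y < x -> f y <= f x) -> 0 <= d.
Proof.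
  intros D Hlo Hmax; apply Rnot_lt_le; intros Hd.
  destruct (D (- d / 2) ltac:(lra)) as [[del Hdel] Hf]; simpl in Hf.
  set (h := Rmin (del / 2) (x - lo)).
  assert (Hh : 0 < h <= x - lo /\ h < del)
    by (unfold h; generalize (Rmin_l (del / 2) (x - lo)) (Rmin_r (del / 2) (x - lo));
        apply Rmin_case; lra).
  specialize (Hf (- h) ltac:(lra) ltac:(rewrite Rabs_Ropp, Rabs_pos_eq; lra)).
  apply Rabs_def2 in Hf; destruct Hf as [Hf _].
  specialize (Hmax (x + - h) ltac:(lra)).
  assert (Hq : 0 <= (f (x + - h) - f x) / - h * h).
  { replace ((f (x + - h) - f x) / - h * h) with (f x - f (x + - h)) by (field; lra). lra. }
  nra.
Qed.

Lemma derivable_pt_lim_max_right f x d hi : derivable_pt_lim f x d -> x < hi ->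
  (forall y, x < y <= hi -> f y <= f x) -> d <= 0.
Proof.
  intros D Hhi Hmax.
  assert (Dm : derivable_pt_lim (fun y => f (- y)) (- x) (- d)).
  { replace (- d) with (d * -1) by ring.
    apply (derivable_pt_lim_comp (fun y => - y) f); [|now rewrite Ropp_involutive].
    apply derivable_pt_lim_opp, derivable_pt_lim_id. }
  assert (0 <= - d); [|lra].
  apply (derivable_pt_lim_max_left _ _ _ (- hi) Dm); [lra|].
  intros y Hy; rewrite Ropp_involutive; apply Hmax; lra.
Qed.

Section Welfare.

Variables (a Nm Nf R0 lamS : R).
Hypotheses (Ha : 0 < a < 1) (HNm : 0 < Nm) (HNf : 0 < Nf) (HR0 : 0 < R0) (HlamS : 1 < lamS).

Lemma macro_rate_pos m : 0 < m -> 0 < m * R0 / Nm.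
Proof. intros; apply Rdiv_lt_0_compat; [apply Rmult_lt_0_compat|]; lra. Qed.

Lemma small_rate_pos s : 0 < s -> 0 < lamS * s * R0 / Nf.
Proof. intros; apply Rdiv_lt_0_compat; [repeat apply Rmult_lt_0_compat|]; lra. Qed.

Lemma macro_rate_nonneg m : 0 <= m -> 0 <= m * R0 / Nm.
Proof. intros; apply Rdiv_le_0_compat; [apply Rmult_le_pos|]; lra. Qed.

Lemma small_rate_nonneg s : 0 <= s -> 0 <= lamS * s * R0 / Nf.
Proof. intros; apply Rdiv_le_0_compat; [repeat apply Rmult_le_pos|]; lra. Qed.

Lemma macro_rate_lt m1 m2 : m1 < m2 -> m1 * R0 / Nm < m2 * R0 / Nm.
Proof.
  intros; unfold Rdiv; apply Rmult_lt_compat_r; [apply Rinv_0_lt_compat; lra|].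
  apply Rmult_lt_compat_r; lra.
Qed.

Lemma small_rate_lt s1 s2 : s1 < s2 -> lamS * s1 * R0 / Nf < lamS * s2 * R0 / Nf.
Proof.
  intros; unfold Rdiv; apply Rmult_lt_compat_r; [apply Rinv_0_lt_compat; lra|].
  apply Rmult_lt_compat_r; [|apply Rmult_lt_compat_l]; lra.
Qed.

Definition SWt Bt s := Nm * u a ((Bt - s) * R0 / Nm) + Nf * u a (lamS * s * R0 / Nf).

Lemma SW_SWt B1 B2 x1 x2 : SW a Nm Nf R0 lamS B1 B2 x1 x2 = SWt (B1 + B2) (x1 + x2).
Proof.
  unfold SW, SWt, RM, RS.
  now replace (B1 - x1 + (B2 - x2)) with (B1 + B2 - (x1 + x2)) by ring.
Qed.

(* [R0 * mSW Bt s] is the derivative of [SWt Bt] at [s]. *)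
Definition mSW Bt s :=
  lamS * Rpower (lamS * s * R0 / Nf) (- a) - Rpower ((Bt - s) * R0 / Nm) (- a).

Lemma SWt_tangent_lt Bt s y : 0 < s < Bt -> 0 <= y <= Bt -> y <> s ->
  SWt Bt y < SWt Bt s + R0 * (y - s) * mSW Bt s.
Proof.
  intros Hs Hy Hne; unfold SWt, mSW.
  assert (Tm := u_tangent_lt a ((Bt - y) * R0 / Nm) ((Bt - s) * R0 / Nm) Ha
                  ltac:(apply macro_rate_pos; lra)).
  assert (Ts := u_tangent_lt a (lamS * y * R0 / Nf) (lamS * s * R0 / Nf) Ha
                  ltac:(apply small_rate_pos; lra)).
  specialize (Tm ltac:(apply macro_rate_nonneg; lra)).
  specialize (Ts ltac:(apply small_rate_nonneg; lra)).
  specialize (Tm ltac:(intros E; apply Hne; apply (f_equal (fun t => t * Nm / R0)) in E;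
                       field_simplify in E; lra)).
  specialize (Ts ltac:(intros E; apply Hne; apply (f_equal (fun t => t * Nf / R0 / lamS)) in E;
                       field_simplify in E; lra)).
  set (Q := Rpower ((Bt - s) * R0 / Nm) (- a)) in *.
  set (P := Rpower (lamS * s * R0 / Nf) (- a)) in *.
  assert (Em : Nm * (Q * ((Bt - y) * R0 / Nm - (Bt - s) * R0 / Nm)) = - R0 * (y - s) * Q)
    by (field; lra).
  assert (Es : Nf * (P * (lamS * y * R0 / Nf - lamS * s * R0 / Nf)) = R0 * (y - s) * lamS * P)
    by (field; lra).
  nra.
Qed.

Lemma mSW_decreasing Bt s1 s2 : 0 < s1 -> s1 < s2 -> s2 < Bt -> mSW Bt s2 < mSW Bt s1.
Proof.
  intros Hs1 Hs12 Hs2; unfold mSW.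
  assert (Rpower (lamS * s2 * R0 / Nf) (- a) < Rpower (lamS * s1 * R0 / Nf) (- a)).
  { apply Rpower_opp_lt; [apply small_rate_pos | apply small_rate_lt |]; lra. }
  assert (Rpower ((Bt - s1) * R0 / Nm) (- a) < Rpower ((Bt - s2) * R0 / Nm) (- a)).
  { apply Rpower_opp_lt; [apply macro_rate_pos | apply macro_rate_lt |]; lra. }
  nra.
Qed.

Definition kappa := Nf * eps a lamS / Nm.

(* The welfare-optimal total small-cell bandwidth. *)
Definition sopt Bt := kappa * Bt / (1 + kappa).

Lemma kappa_pos : 0 < kappa.
Proof.
  unfold kappa, eps; apply Rdiv_lt_0_compat; [apply Rmult_lt_0_compat; [|apply Rpower_gt0]|]; lra.
Qed.

Lemma sopt_fixpoint Bt : sopt Bt = kappa * (Bt - sopt Bt).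
Proof. unfold sopt; pose proof kappa_pos; field; lra. Qed.

Lemma sopt_bounds Bt : 0 < Bt -> 0 < sopt Bt < Bt.
Proof.
  intros HBt; pose proof (sopt_fixpoint Bt) as E; pose proof kappa_pos.
  assert (0 < sopt Bt) by (unfold sopt; apply Rdiv_lt_0_compat; nra).
  split; nra.
Qed.

Lemma le_sopt_iff Bt s : s <= sopt Bt <-> s <= kappa * (Bt - s).
Proof. pose proof (sopt_fixpoint Bt); pose proof kappa_pos; split; intros; nra. Qed.

Lemma lt_sopt_iff Bt s : sopt Bt < s <-> kappa * (Bt - s) < s.
Proof. pose proof (sopt_fixpoint Bt); pose proof kappa_pos; split; intros; nra. Qed.

Lemma lamS_eps_balance : lamS * Rpower lamS (- a) * Rpower (eps a lamS) (- a) = 1.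
Proof.
  unfold eps; rewrite Rpower_mult, Rmult_assoc, <- Rpower_plus.
  rewrite <- (Rpower_1 lamS) at 1 by lra; rewrite <- Rpower_plus.
  replace (1 + (- a + (1 / a - 1) * - a)) with 0 by (field; lra).
  apply Rpower_O; lra.
Qed.

Lemma mSW_sopt Bt : 0 < Bt -> mSW Bt (sopt Bt) = 0.
Proof.
  intros HBt; unfold mSW.
  set (rm := (Bt - sopt Bt) * R0 / Nm).
  assert (Hrm : 0 < rm) by (apply macro_rate_pos; pose proof (sopt_bounds Bt HBt); lra).
  assert (He : 0 < eps a lamS) by apply Rpower_gt0.
  replace (lamS * sopt Bt * R0 / Nf) with (lamS * eps a lamS * rm).
  2: { unfold rm; rewrite sopt_fixpoint at 2; unfold kappa; field; lra. }
  rewrite <- (Rpower_mult_distr (lamS * eps a lamS)), <- (Rpower_mult_distr lamS)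
    by first [assumption | lra | apply Rmult_lt_0_compat; lra].
  transitivity ((lamS * Rpower lamS (- a) * Rpower (eps a lamS) (- a)) * Rpower rm (- a)
                - Rpower rm (- a)); [ring | rewrite lamS_eps_balance; ring].
Qed.

Lemma mSW_pos Bt s : 0 < Bt -> 0 < s < sopt Bt -> 0 < mSW Bt s.
Proof.
  intros HBt Hs; rewrite <- (mSW_sopt Bt HBt).
  apply mSW_decreasing; pose proof (sopt_bounds Bt HBt); lra.
Qed.

Lemma mSW_neg Bt s : 0 < Bt -> sopt Bt < s < Bt -> mSW Bt s < 0.
Proof.
  intros HBt Hs; rewrite <- (mSW_sopt Bt HBt).
  apply mSW_decreasing; pose proof (sopt_bounds Bt HBt); lra.
Qed.

Lemma SWt_lt_sopt Bt y : 0 < Bt -> 0 <= y <= Bt -> y <> sopt Bt ->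
  SWt Bt y < SWt Bt (sopt Bt).
Proof.
  intros HBt Hy Hne.
  pose proof (SWt_tangent_lt Bt (sopt Bt) y (sopt_bounds Bt HBt) Hy Hne) as H.
  rewrite mSW_sopt in H by exact HBt; lra.
Qed.

Lemma SWt_decreasing Bt s y : 0 < Bt -> sopt Bt <= s -> s < y <= Bt -> SWt Bt y < SWt Bt s.
Proof.
  intros HBt Hs Hy; pose proof (sopt_bounds Bt HBt).
  pose proof (SWt_tangent_lt Bt s y ltac:(lra) ltac:(lra) ltac:(lra)) as Htan.
  assert (mSW Bt s <= 0).
  { destruct Hs as [Hs | <-]; [left; apply mSW_neg | rewrite mSW_sopt]; lra. }
  assert (0 < R0 * (y - s)) by (apply Rmult_lt_0_compat; lra).
  nra.
Qed.

Lemma SWt_le_Rmax_sopt Bt L y : 0 < Bt -> 0 <= L <= y -> y <= Bt ->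
  SWt Bt y <= SWt Bt (Rmax L (sopt Bt)).
Proof.
  intros HBt HL Hy; unfold Rmax; destruct (Rle_dec L (sopt Bt)) as [HLs | HLs].
  - destruct (Req_dec y (sopt Bt)) as [-> | Hne]; [lra|].
    left; apply SWt_lt_sopt; lra.
  - destruct (Req_dec y L) as [-> | Hne]; [lra|].
    left; apply SWt_decreasing; lra.
Qed.

Lemma is_max_SW_value B1 B2 l1 l2 M :
  0 <= l1 <= B1 -> 0 <= l2 <= B2 -> l1 + l2 < B1 + B2 ->
  is_max_SW a Nm Nf R0 lamS B1 B2 l1 l2 M ->
  M = SWt (B1 + B2) (Rmax (l1 + l2) (sopt (B1 + B2))).
Proof.
  intros Hl1 Hl2 HL [[w1 [w2 [[Hw1 Hw2] <-]]] Hmax].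
  assert (HBt : 0 < B1 + B2) by lra.
  set (Bt := B1 + B2) in *; set (L := l1 + l2) in *.
  assert (HL0 : 0 <= L) by (unfold L; lra).
  set (sig := Rmax L (sopt Bt)).
  assert (Hsig : L <= sig < Bt)
    by (unfold sig; pose proof (sopt_bounds Bt HBt); apply Rmax_case_strong; lra).
  (* a feasible profile with total [sig], moving both SPs the same fraction towards [B_i] *)
  set (t := (sig - L) / (Bt - L)).
  assert (Ht : 0 <= t <= 1).
  { unfold t; split; [apply Rdiv_le_0_compat; lra|].
    apply Rmult_le_reg_r with (Bt - L); [lra|]; field_simplify; lra. }
  assert (Hp : feasible B1 B2 l1 l2 (l1 + t * (B1 - l1)) (l2 + t * (B2 - l2)))
    by (split; split; unfold Bt, L in *; nra).
  specialize (Hmax _ _ Hp).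
  rewrite !SW_SWt in *.
  replace (l1 + t * (B1 - l1) + (l2 + t * (B2 - l2))) with sig in Hmax
    by (unfold t, sig, Bt, L in *; field; lra).
  pose proof (SWt_le_Rmax_sopt Bt L (w1 + w2) HBt ltac:(unfold L; lra) ltac:(unfold Bt; lra))
    as Hle.
  fold sig in Hle; unfold Bt in *; lra.
Qed.

End Welfare.

Section Revenue.

Variables (a Nm Nf R0 lamS : R).
Hypotheses (Ha : 0 < a < 1) (HNm : 0 < Nm) (HNf : 0 < Nf) (HR0 : 0 < R0) (HlamS : 1 < lamS).

(* SP 1's marginal revenue [dS_1/dB_{1,S}], divided by [R0]. *)
Definition mrev B1 B2 x1 x2 :=
  lamS * Rpower (RS Nf R0 lamS x1 x2) (- a) * (1 - a * x1 / (x1 + x2))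
  - Rpower (RM Nm R0 B1 B2 x1 x2) (- a) * (1 - a * (B1 - x1) / (B1 - x1 + (B2 - x2))).

Lemma S1_derivative B1 B2 x1 x2 : 0 < x1 + x2 -> 0 < B1 - x1 + (B2 - x2) ->
  derivable_pt_lim (fun y => S1 a Nm Nf R0 lamS B1 B2 y x2) x1 (R0 * mrev B1 B2 x1 x2).
Proof.
  intros Hs HM.
  set (g := fun y => R0 * (B1 - y) * Rpower ((B1 - y + (B2 - x2)) * R0 / Nm) (- a)
                     + R0 * lamS * y * Rpower (lamS * (y + x2) * R0 / Nf) (- a)).
  apply derivable_pt_lim_locally_ext with (f := g) (a := - x2) (b := B1 + B2 - x2); [lra| |].
  { intros y Hy; unfold g, S1, RM, RS.
    rewrite !rpow_of_pos; [reflexivity | apply small_rate_pos | apply macro_rate_pos];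
      assumption || lra. }
  apply is_derive_Reals; unfold g, mrev, RM, RS, Rpower.
  auto_derive.
  - split; [apply macro_rate_pos | split; [apply small_rate_pos|]]; lra.
  - unfold Rminus, Rdiv; field; repeat split; lra.
Qed.

Lemma RS_swap x1 x2 : RS Nf R0 lamS x2 x1 = RS Nf R0 lamS x1 x2.
Proof. unfold RS; now rewrite Rplus_comm. Qed.

Lemma RM_swap B1 B2 x1 x2 : RM Nm R0 B2 B1 x2 x1 = RM Nm R0 B1 B2 x1 x2.
Proof. unfold RM; now rewrite Rplus_comm. Qed.

Lemma mSW_profile B1 B2 x1 x2 :
  mSW a Nm Nf R0 lamS (B1 + B2) (x1 + x2)
  = lamS * Rpower (RS Nf R0 lamS x1 x2) (- a) - Rpower (RM Nm R0 B1 B2 x1 x2) (- a).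
Proof.
  unfold mSW, RS, RM.
  now replace (B1 - x1 + (B2 - x2)) with (B1 + B2 - (x1 + x2)) by ring.
Qed.

Lemma mrev_shares B1 B2 x1 x2 : 0 < x1 + x2 -> 0 < B1 - x1 + (B2 - x2) ->
  mrev B1 B2 x1 x2 =
  lamS * Rpower (RS Nf R0 lamS x1 x2) (- a) * (1 - a + a * (x2 / (x1 + x2)))
  - Rpower (RM Nm R0 B1 B2 x1 x2) (- a) * (1 - a + a * ((B2 - x2) / (B1 - x1 + (B2 - x2)))).
Proof. intros; unfold mrev; field; lra. Qed.

Lemma mrev_swap_shares B1 B2 x1 x2 : 0 < x1 + x2 -> 0 < B1 - x1 + (B2 - x2) ->
  mrev B2 B1 x2 x1 =
  lamS * Rpower (RS Nf R0 lamS x1 x2) (- a) * (1 - a + a * (x1 / (x1 + x2)))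
  - Rpower (RM Nm R0 B1 B2 x1 x2) (- a) * (1 - a + a * ((B1 - x1) / (B1 - x1 + (B2 - x2)))).
Proof.
  intros; rewrite mrev_shares, RS_swap, RM_swap by lra.
  now replace (x2 + x1) with (x1 + x2) by ring;
    replace (B2 - x2 + (B1 - x1)) with (B1 - x1 + (B2 - x2)) by ring.
Qed.

Lemma mrev_sum B1 B2 x1 x2 : 0 < x1 + x2 -> 0 < B1 - x1 + (B2 - x2) ->
  mrev B1 B2 x1 x2 + mrev B2 B1 x2 x1 = (2 - a) * mSW a Nm Nf R0 lamS (B1 + B2) (x1 + x2).
Proof. intros; rewrite mrev_shares, mrev_swap_shares, mSW_profile by lra; field; lra. Qed.

Lemma share_factor_ge p q : 0 <= p -> 0 < q -> 1 - a <= 1 - a + a * (p / q).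
Proof. intros Hp Hq; pose proof (Rdiv_le_0_compat p q Hp Hq); nra. Qed.

Lemma mrev_decreasing B1 B2 x1 x1' x2 : 0 <= x2 <= B2 -> 0 < x1 + x2 -> x1 < x1' ->
  0 < B1 - x1' + (B2 - x2) -> mrev B1 B2 x1' x2 < mrev B1 B2 x1 x2.
Proof.
  intros Hx2 Hs Hx1 HM; rewrite !mrev_shares by lra.
  assert (HP : lamS * Rpower (RS Nf R0 lamS x1' x2) (- a)
               < lamS * Rpower (RS Nf R0 lamS x1 x2) (- a)).
  { apply Rmult_lt_compat_l; [lra|]; unfold RS.
    apply Rpower_opp_lt; [apply small_rate_pos | apply small_rate_lt |]; lra. }
  assert (HQ : Rpower (RM Nm R0 B1 B2 x1 x2) (- a) < Rpower (RM Nm R0 B1 B2 x1' x2) (- a)).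
  { unfold RM; apply Rpower_opp_lt; [apply macro_rate_pos | apply macro_rate_lt |]; lra. }
  set (P := lamS * Rpower (RS Nf R0 lamS x1 x2) (- a)) in *.
  set (P' := lamS * Rpower (RS Nf R0 lamS x1' x2) (- a)) in *.
  set (Q := Rpower (RM Nm R0 B1 B2 x1 x2) (- a)) in *.
  set (Q' := Rpower (RM Nm R0 B1 B2 x1' x2) (- a)) in *.
  assert (Hf : 1 - a + a * (x2 / (x1' + x2)) <= 1 - a + a * (x2 / (x1 + x2))).
  { apply Rplus_le_compat_l, Rmult_le_compat_l; [lra|].
    apply Rmult_le_compat_l; [lra|]; apply Rinv_le_contravar; lra. }
  assert (Hg : 1 - a + a * ((B2 - x2) / (B1 - x1 + (B2 - x2)))
               <= 1 - a + a * ((B2 - x2) / (B1 - x1' + (B2 - x2)))).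
  { apply Rplus_le_compat_l, Rmult_le_compat_l; [lra|].
    apply Rmult_le_compat_l; [lra|]; apply Rinv_le_contravar; lra. }
  pose proof (share_factor_ge x2 (x1' + x2) ltac:(lra) ltac:(lra)).
  pose proof (share_factor_ge (B2 - x2) (B1 - x1 + (B2 - x2)) ltac:(lra) ltac:(lra)).
  assert (0 < P') by (apply Rmult_lt_0_compat; [lra | apply Rpower_gt0]).
  assert (0 < Q) by apply Rpower_gt0.
  nra.
Qed.

Lemma dSi_mrev B1o B2o B1n B2n : 0 < B1n + B2n -> 0 < B1o + B2o ->
  dSi a Nm Nf R0 lamS B1o B2o B1n B2n B1o B1n = mrev (B1o + B1n) (B2o + B2n) B1n B2n.
Proof.
  intros Hn Ho; unfold dSi, mrev, RS, RM.
  replace (B1o + B1n - B1n + (B2o + B2n - B2n)) with (B1o + B2o) by ring.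
  replace (B1o + B1n - B1n) with B1o by ring.
  rewrite !Rpower_sub1 by (first [apply small_rate_pos | apply macro_rate_pos]; lra).
  field; repeat split;
    first [lra | apply Rgt_not_eq, macro_rate_pos; lra | apply Rgt_not_eq, small_rate_pos; lra].
Qed.

Lemma dSi_swap B1o B2o B1n B2n Bio Bin :
  dSi a Nm Nf R0 lamS B1o B2o B1n B2n Bio Bin = dSi a Nm Nf R0 lamS B2o B1o B2n B1n Bio Bin.
Proof. unfold dSi; now rewrite (Rplus_comm B1n), (Rplus_comm B1o). Qed.

End Revenue.

Section Equilibrium.

Variables (a Nm Nf R0 lamS : R).
Hypotheses (Ha : 0 < a < 1) (HNm : 0 < Nm) (HNf : 0 < Nf) (HR0 : 0 < R0) (HlamS : 1 < lamS).

Notation isNE := (isNE a Nm Nf R0 lamS).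
Notation mrev := (mrev a Nm Nf R0 lamS).
Notation S1 := (S1 a Nm Nf R0 lamS).
Notation mSW := (mSW a Nm Nf R0 lamS).
Notation SWt := (SWt a Nm Nf R0 lamS).
Notation sopt := (sopt a Nm Nf lamS).
Notation kappa := (kappa a Nm Nf lamS).

Lemma S2_S1_swap B1 B2 x1 x2 :
  S2 a Nm Nf R0 lamS B1 B2 x1 x2 = S1 B2 B1 x2 x1.
Proof. unfold S1, S2; now rewrite RS_swap, RM_swap. Qed.

Lemma isNE_swap B1 B2 l1 l2 x1 x2 : isNE B1 B2 l1 l2 x1 x2 -> isNE B2 B1 l2 l1 x2 x1.
Proof.
  intros [[F1 F2] [H1 H2]]; split; [split; assumption | split].
  - intros y Hy; rewrite <- !S2_S1_swap; auto.
  - intros y Hy; rewrite !S2_S1_swap; auto.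
Qed.

Lemma isNE_mrev_ge0 B1 B2 l1 l2 x1 x2 : isNE B1 B2 l1 l2 x1 x2 ->
  0 < x1 + x2 -> 0 < B1 - x1 + (B2 - x2) -> l1 < x1 -> 0 <= mrev B1 B2 x1 x2.
Proof.
  intros [[F1 F2] [H1 _]] Hs HM Hl.
  assert (0 <= R0 * mrev B1 B2 x1 x2); [|nra].
  apply (derivable_pt_lim_max_left (fun y => S1 B1 B2 y x2) x1 _ l1);
    [eapply S1_derivative; eassumption | exact Hl |].
  intros y Hy; apply H1; lra.
Qed.

Lemma isNE_mrev_le0 B1 B2 l1 l2 x1 x2 : isNE B1 B2 l1 l2 x1 x2 ->
  0 < x1 + x2 -> 0 < B1 - x1 + (B2 - x2) -> x1 < B1 -> mrev B1 B2 x1 x2 <= 0.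
Proof.
  intros [[F1 F2] [H1 _]] Hs HM Hl.
  assert (R0 * mrev B1 B2 x1 x2 <= 0); [|nra].
  apply (derivable_pt_lim_max_right (fun y => S1 B1 B2 y x2) x1 _ B1);
    [eapply S1_derivative; eassumption | exact Hl |].
  intros y Hy; apply H1; lra.
Qed.

(* Near-empty macro bands earn an unbounded price, so SP 1 would move some bandwidth back. *)
Lemma isNE_sum_lt_total B1 B2 l1 l2 x1 x2 : 0 < B2 -> 0 <= l1 < B1 ->
  isNE B1 B2 l1 l2 x1 x2 -> x1 + x2 < B1 + B2.
Proof.
  intros HB2 Hl1 HNE; destruct HNE as [[F1 F2] [H1 _]].
  destruct (Rlt_dec (x1 + x2) (B1 + B2)) as [|Hfull]; [assumption | exfalso].
  assert (E1 : x1 = B1) by lra; assert (E2 : x2 = B2) by lra; subst x1 x2.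
  set (Pc := Rpower (RS Nf R0 lamS B1 B2) (- a)).
  destruct (Rpower_opp_unbounded a (R0 / Nm) (B1 - l1) (lamS * Pc)) as [h [Hh Hbig]];
    [lra | apply Rdiv_lt_0_compat; lra | lra |].
  specialize (H1 (B1 - h) ltac:(lra)); unfold S1, Defs.S1 in H1.
  replace (RM Nm R0 B1 B2 (B1 - h) B2) with (h * (R0 / Nm)) in H1 by (unfold RM; field; lra).
  assert (Hsmall : Pc <= Rpower (RS Nf R0 lamS (B1 - h) B2) (- a)).
  { unfold Pc, RS; apply Rpower_opp_le; [apply small_rate_pos | left; apply small_rate_lt |];
      lra. }
  rewrite (rpow_of_pos (RS _ _ _ B1 B2)), (rpow_of_pos (RS _ _ _ (B1 - h) B2)), rpow_of_pos
    in H1 by (unfold RS; first [apply small_rate_pos; lra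
                               | apply Rmult_lt_0_compat; [lra | apply Rdiv_lt_0_compat; lra]]).
  fold Pc in H1; replace (B1 - B1) with 0 in H1 by ring.
  assert (0 < Pc) by apply Rpower_gt0.
  assert (R0 * lamS * (B1 - h) * Pc
          <= R0 * lamS * (B1 - h) * Rpower (RS Nf R0 lamS (B1 - h) B2) (- a))
    by (apply Rmult_le_compat_l; [repeat apply Rmult_le_pos |]; lra).
  assert (R0 * h * (lamS * Pc) < R0 * h * Rpower (h * (R0 / Nm)) (- a))
    by (apply Rmult_lt_compat_l; nra).
  nra.
Qed.

(* Likewise, near-empty small-cell bands earn an unbounded price. *)
Lemma isNE_sum_pos B1 B2 l1 l2 x1 x2 : 0 < B1 -> 0 < B2 -> 0 <= l1 -> 0 <= l2 ->
  isNE B1 B2 l1 l2 x1 x2 -> 0 < x1 + x2.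
Proof.
  intros HB1 HB2 Hl1 Hl2 HNE; destruct HNE as [[F1 F2] [H1 _]].
  destruct (Rlt_dec 0 (x1 + x2)) as [|Hzero]; [assumption | exfalso].
  assert (E1 : x1 = 0) by lra; assert (E2 : x2 = 0) by lra; subst x1 x2.
  set (Pm := Rpower (RM Nm R0 B1 B2 0 0) (- a)).
  destruct (Rpower_opp_unbounded a (lamS * R0 / Nf) B1 Pm) as [h [Hh Hbig]];
    [lra | apply Rdiv_lt_0_compat; [apply Rmult_lt_0_compat|]; lra | lra |].
  specialize (H1 h ltac:(lra)); unfold S1, Defs.S1 in H1.
  replace (RS Nf R0 lamS h 0) with (h * (lamS * R0 / Nf)) in H1 by (unfold RS; field; lra).
  assert (Hmacro : Pm <= Rpower (RM Nm R0 B1 B2 h 0) (- a)).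
  { unfold Pm, RM; apply Rpower_opp_le; [apply macro_rate_pos | left; apply macro_rate_lt |];
      lra. }
  rewrite (rpow_of_pos (RM _ _ _ _ 0 0)), (rpow_of_pos (RM _ _ _ _ h 0)), rpow_of_pos
    in H1 by (unfold RM; first [apply macro_rate_pos; lra
                               | apply Rmult_lt_0_compat;
                                 [lra | apply Rdiv_lt_0_compat; [apply Rmult_lt_0_compat|]; lra]]).
  fold Pm in H1; replace (B1 - 0) with B1 in H1 by ring.
  assert (0 < Pm) by apply Rpower_gt0.
  assert (R0 * (B1 - h) * Pm <= R0 * (B1 - h) * Rpower (RM Nm R0 B1 B2 h 0) (- a))
    by (apply Rmult_le_compat_l; [apply Rmult_le_pos |]; lra).
  assert (R0 * h * Pm < R0 * lamS * h * Rpower (h * (lamS * R0 / Nf)) (- a)).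
  { set (X := Rpower (h * (lamS * R0 / Nf)) (- a)) in *.
    assert (0 < R0 * h * X) by (repeat apply Rmult_lt_0_compat; [lra | lra | apply Rpower_gt0]).
    assert (R0 * h * Pm < R0 * h * X) by (apply Rmult_lt_compat_l; nra).
    replace (R0 * lamS * h * X) with (lamS * (R0 * h * X)) by ring; nra. }
  nra.
Qed.


Lemma isNE_mrev_le0_of_mSW_pos B1 B2 l1 l2 x1 x2 : 0 <= l1 -> isNE B1 B2 l1 l2 x1 x2 ->
  0 < x1 + x2 < B1 + B2 -> 0 < mSW (B1 + B2) (x1 + x2) -> mrev B1 B2 x1 x2 <= 0.
Proof.
  intros Hl1 HNE Hs Hm; pose proof HNE as [[F1 F2] _].
  destruct (Rle_dec (mrev B1 B2 x1 x2) 0) as [|Hpos]; [assumption | exfalso].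
  assert (E1 : x1 = B1).
  { destruct (Rlt_dec x1 B1) as [Hlt|]; [|lra].
    pose proof (isNE_mrev_le0 _ _ _ _ _ _ HNE ltac:(lra) ltac:(lra) Hlt); lra. }
  (* SP 1 has no macro-cell bandwidth left, so SP 2 gains from moving to small cells too *)
  assert (Hm2 : 0 < mrev B2 B1 x2 x1).
  { rewrite mrev_swap_shares by lra; rewrite mSW_profile in Hm.
    replace ((B1 - x1) / (B1 - x1 + (B2 - x2))) with 0 by (rewrite E1; field; lra).
    assert (1 - a <= 1 - a + a * (x1 / (x1 + x2))) by (apply share_factor_ge; lra).
    set (P := lamS * Rpower (RS Nf R0 lamS x1 x2) (- a)) in *.
    assert (0 < P) by (apply Rmult_lt_0_compat; [lra | apply Rpower_gt0]).
    nra. }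
  assert (x2 < B2) by lra.
  pose proof (isNE_mrev_le0 _ _ _ _ _ _ (isNE_swap _ _ _ _ _ _ HNE) ltac:(lra) ltac:(lra)
                ltac:(assumption)); lra.
Qed.

Lemma isNE_sum_ge_sopt B1 B2 l1 l2 x1 x2 : 0 <= l1 < B1 -> 0 <= l2 < B2 ->
  isNE B1 B2 l1 l2 x1 x2 -> sopt (B1 + B2) <= x1 + x2.
Proof.
  intros Hl1 Hl2 HNE.
  assert (Hs : 0 < x1 + x2) by (eapply isNE_sum_pos; [| | | | exact HNE]; lra).
  assert (HsB : x1 + x2 < B1 + B2) by (eapply isNE_sum_lt_total; [| | exact HNE]; lra).
  apply Rnot_lt_le; intros Hlt.
  assert (Hm : 0 < mSW (B1 + B2) (x1 + x2)) by (apply mSW_pos; lra).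
  pose proof (isNE_mrev_le0_of_mSW_pos B1 B2 l1 l2 x1 x2 ltac:(lra) HNE ltac:(lra) Hm).
  pose proof (isNE_mrev_le0_of_mSW_pos B2 B1 l2 l1 x2 x1 ltac:(lra) (isNE_swap _ _ _ _ _ _ HNE))
    as H2.
  rewrite (Rplus_comm x2 x1), (Rplus_comm B2 B1) in H2; specialize (H2 ltac:(lra) Hm).
  assert (mrev B1 B2 x1 x2 + mrev B2 B1 x2 x1 = (2 - a) * mSW (B1 + B2) (x1 + x2))
    by (apply mrev_sum; lra).
  nra.
Qed.

Lemma isNE_mrev_ge0_of_sopt_lt B1 B2 l1 l2 x1 x2 : 0 <= l1 -> 0 <= l2 ->
  l1 <= kappa * (B1 - l1) -> isNE B1 B2 l1 l2 x1 x2 -> l1 + l2 < x1 + x2 < B1 + B2 ->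
  sopt (B1 + B2) < x1 + x2 -> 0 <= mrev B1 B2 x1 x2.
Proof.
  intros Hl1 Hl2 Hk HNE Hs Hopt; pose proof HNE as [[F1 F2] _].
  assert (HBt : 0 < B1 + B2) by lra.
  destruct (Rle_dec 0 (mrev B1 B2 x1 x2)) as [|Hneg]; [assumption | exfalso].
  assert (E1 : x1 = l1).
  { destruct (Rlt_dec l1 x1) as [Hlt|]; [|lra].
    pose proof (isNE_mrev_ge0 _ _ _ _ _ _ HNE ltac:(lra) ltac:(lra) Hlt); lra. }
  assert (Hm2 : 0 <= mrev B2 B1 x2 x1).
  { destruct (Rlt_dec l2 x2) as [Hlt|]; [|lra].
    apply (isNE_mrev_ge0 _ _ _ _ _ _ (isNE_swap _ _ _ _ _ _ HNE)); lra. }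
  assert (Hm : mSW (B1 + B2) (x1 + x2) < 0) by (apply mSW_neg; lra).
  rewrite mSW_profile in Hm; rewrite mrev_swap_shares in Hm2 by lra.
  set (s := x1 + x2) in *; set (M := B1 - x1 + (B2 - x2)) in *.
  set (P := lamS * Rpower (RS Nf R0 lamS x1 x2) (- a)) in *.
  set (Q := Rpower (RM Nm R0 B1 B2 x1 x2) (- a)) in *.
  assert (HP : 0 < P) by (apply Rmult_lt_0_compat; [lra | apply Rpower_gt0]).
  assert (1 - a <= 1 - a + a * (x1 / s)) by (apply share_factor_ge; lra).
  (* SP 2 can only profit at a profile where SP 1's small-cell share exceeds its macro share *)
  assert (Hshare : (B1 - x1) / M < x1 / s).
  { assert (HQ : 0 < Q) by apply Rpower_gt0.
    assert (P * (1 - a + a * (x1 / s)) < Q * (1 - a + a * (x1 / s))) by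
      (apply Rmult_lt_compat_r; lra).
    assert (1 - a + a * ((B1 - x1) / M) < 1 - a + a * (x1 / s)) by
      (apply Rmult_lt_reg_l with Q; lra).
    nra. }
  assert (HM : 0 < M) by (unfold M, s in *; lra).
  assert (Hcross : (B1 - x1) * s < x1 * M).
  { apply Rmult_lt_compat_r with (r := s * M) in Hshare; [|unfold s in *; nra].
    replace ((B1 - x1) / M * (s * M)) with ((B1 - x1) * s) in Hshare by (field; lra).
    replace (x1 / s * (s * M)) with (x1 * M) in Hshare by (field; unfold s in *; lra).
    exact Hshare. }
  rewrite lt_sopt_iff in Hopt by lra.
  replace (B1 + B2 - s) with M in Hopt by (unfold M, s; ring).
  assert (x1 * M <= kappa * (B1 - x1) * M) by (apply Rmult_le_compat_r; [|rewrite E1]; lra).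
  assert ((B1 - x1) * (kappa * M) <= (B1 - x1) * s) by (apply Rmult_le_compat_l; lra).
  nra.
Qed.

Lemma isNE_sum_le_sopt B1 B2 l1 l2 x1 x2 : 0 <= l1 < B1 -> 0 <= l2 < B2 ->
  l1 <= kappa * (B1 - l1) -> l2 <= kappa * (B2 - l2) -> l1 + l2 <= sopt (B1 + B2) ->
  isNE B1 B2 l1 l2 x1 x2 -> x1 + x2 <= sopt (B1 + B2).
Proof.
  intros Hl1 Hl2 Hk1 Hk2 Hl HNE.
  assert (HsB : x1 + x2 < B1 + B2) by (eapply isNE_sum_lt_total; [| | exact HNE]; lra).
  apply Rnot_lt_le; intros Hlt.
  assert (0 < sopt (B1 + B2) < B1 + B2) by (apply sopt_bounds; lra).
  assert (Hm : mSW (B1 + B2) (x1 + x2) < 0) by (apply mSW_neg; lra).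
  pose proof (isNE_mrev_ge0_of_sopt_lt B1 B2 l1 l2 x1 x2 ltac:(lra) ltac:(lra) Hk1 HNE
                ltac:(lra) Hlt).
  pose proof (isNE_mrev_ge0_of_sopt_lt B2 B1 l2 l1 x2 x1 ltac:(lra) ltac:(lra) Hk2
                (isNE_swap _ _ _ _ _ _ HNE)) as H2.
  rewrite (Rplus_comm x2 x1), (Rplus_comm B2 B1), (Rplus_comm l2 l1) in H2.
  specialize (H2 ltac:(lra) Hlt).
  assert (mrev B1 B2 x1 x2 + mrev B2 B1 x2 x1 = (2 - a) * mSW (B1 + B2) (x1 + x2))
    by (apply mrev_sum; lra).
  nra.
Qed.

Lemma isNE_at_sopt_le_kappa B1 B2 l1 l2 x1 x2 : 0 <= l2 -> isNE B1 B2 l1 l2 x1 x2 ->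
  0 < x1 + x2 < B1 + B2 -> x1 + x2 = sopt (B1 + B2) -> x1 <= kappa * (B1 - x1).
Proof.
  intros Hl2 HNE Hs Hopt; pose proof HNE as [[F1 F2] _].
  apply Rnot_lt_le; intros Hgt.
  assert (Hm : mSW (B1 + B2) (x1 + x2) = 0) by (rewrite Hopt; apply mSW_sopt; lra).
  assert (Hsum : mrev B1 B2 x1 x2 + mrev B2 B1 x2 x1 = (2 - a) * mSW (B1 + B2) (x1 + x2))
    by (apply mrev_sum; lra).
  rewrite Hm, Rmult_0_r in Hsum; rewrite mSW_profile in Hm.
  assert (Hsk : x1 + x2 = kappa * (B1 - x1 + (B2 - x2))).
  { rewrite Hopt at 1; rewrite sopt_fixpoint, <- Hopt by lra; ring. }
  set (s := x1 + x2) in *; set (M := B1 - x1 + (B2 - x2)) in *.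
  assert (HM : 0 < M) by (unfold M, s in *; lra).
  assert (Hk : 0 < kappa) by (apply kappa_pos; lra).
  set (P := lamS * Rpower (RS Nf R0 lamS x1 x2) (- a)) in *.
  assert (HP : 0 < P) by (apply Rmult_lt_0_compat; [lra | apply Rpower_gt0]).
  assert (Hm2 : 0 < mrev B2 B1 x2 x1).
  { rewrite mrev_swap_shares by (unfold s, M in *; lra); fold s M P.
    replace (Rpower (RM Nm R0 B1 B2 x1 x2) (- a)) with P by lra.
    replace ((B1 - x1) / M) with (kappa * (B1 - x1) / s) by (rewrite Hsk; field; lra).
    replace (P * (1 - a + a * (x1 / s)) - P * (1 - a + a * (kappa * (B1 - x1) / s)))
      with (P * a * ((x1 - kappa * (B1 - x1)) / s)) by (field; lra).
    apply Rmult_lt_0_compat; [apply Rmult_lt_0_compat | apply Rdiv_lt_0_compat]; lra. }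
  (* SP 2 then fills its whole band, after which SP 1's marginal revenue is nonnegative *)
  assert (E2 : x2 = B2).
  { destruct (Rlt_dec x2 B2) as [Hlt|]; [|lra].
    pose proof (isNE_mrev_le0 B2 B1 l2 l1 x2 x1 (isNE_swap _ _ _ _ _ _ HNE)
                  ltac:(unfold s in *; lra) ltac:(unfold M in *; lra) Hlt).
    lra. }
  assert (0 <= mrev B1 B2 x1 x2); [|lra].
  rewrite mrev_shares by (unfold s, M in *; lra); fold s M P.
  replace (Rpower (RM Nm R0 B1 B2 x1 x2) (- a)) with P by lra.
  rewrite E2, Rminus_diag; unfold Rdiv at 2; rewrite Rmult_0_l, Rmult_0_r.
  replace (P * (1 - a + a * (B2 / s)) - P * (1 - a + 0)) with (P * a * (B2 / s)) by ring.
  apply Rmult_le_pos; [apply Rmult_le_pos | apply Rdiv_le_0_compat]; lra.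
Qed.

Theorem isNE_sum_sopt_iff B1 B2 l1 l2 x1 x2 : 0 <= l1 < B1 -> 0 <= l2 < B2 ->
  l1 + l2 <= sopt (B1 + B2) -> isNE B1 B2 l1 l2 x1 x2 ->
  x1 + x2 = sopt (B1 + B2) <-> l1 <= kappa * (B1 - l1) /\ l2 <= kappa * (B2 - l2).
Proof.
  intros Hl1 Hl2 Hl HNE; pose proof HNE as [[F1 F2] _].
  assert (Hk : 0 < kappa) by (apply kappa_pos; lra).
  assert (Hs : 0 < x1 + x2) by (eapply isNE_sum_pos; [| | | | exact HNE]; lra).
  assert (HsB : x1 + x2 < B1 + B2) by (eapply isNE_sum_lt_total; [| | exact HNE]; lra).
  split.
  - intros Hopt.
    pose proof (isNE_at_sopt_le_kappa B1 B2 l1 l2 x1 x2 ltac:(lra) HNE ltac:(lra) Hopt).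
    pose proof (isNE_at_sopt_le_kappa B2 B1 l2 l1 x2 x1 ltac:(lra) (isNE_swap _ _ _ _ _ _ HNE)
                  ltac:(lra) ltac:(rewrite (Rplus_comm B2); lra)).
    split; nra.
  - intros [Hk1 Hk2]; apply Rle_antisym.
    + exact (isNE_sum_le_sopt B1 B2 l1 l2 x1 x2 Hl1 Hl2 Hk1 Hk2 Hl HNE).
    + exact (isNE_sum_ge_sopt B1 B2 l1 l2 x1 x2 Hl1 Hl2 HNE).
Qed.

Lemma isNE_rival_at_lower_bound B1 B2 l1 l2 x1 x2 : 0 <= l1 -> 0 < l1 + l2 ->
  isNE B1 B2 l1 l2 x1 x2 -> x1 + x2 < B1 + B2 -> x1 = l1 -> mrev B2 B1 l2 l1 <= 0 -> x2 = l2.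
Proof.
  intros Hl1 Hl HNE HsB E1 Hm; pose proof HNE as [[F1 F2] _]; subst x1.
  destruct (Rlt_dec l2 x2) as [Hlt|]; [exfalso | lra].
  pose proof (isNE_mrev_ge0 B2 B1 l2 l1 x2 l1 (isNE_swap _ _ _ _ _ _ HNE)
                ltac:(lra) ltac:(lra) Hlt).
  assert (mrev B2 B1 x2 l1 < mrev B2 B1 l2 l1) by (apply mrev_decreasing; lra).
  lra.
Qed.

Theorem isNE_lower_bounds_iff B1 B2 l1 l2 x1 x2 : 0 <= l1 < B1 -> 0 <= l2 < B2 ->
  sopt (B1 + B2) < l1 + l2 -> isNE B1 B2 l1 l2 x1 x2 ->
  x1 = l1 /\ x2 = l2 <-> mrev B1 B2 l1 l2 <= 0 /\ mrev B2 B1 l2 l1 <= 0.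
Proof.
  intros Hl1 Hl2 Hl HNE; pose proof HNE as [[F1 F2] _].
  assert (0 < sopt (B1 + B2) < B1 + B2) by (apply sopt_bounds; lra).
  assert (HsB : x1 + x2 < B1 + B2) by (eapply isNE_sum_lt_total; [| | exact HNE]; lra).
  split.
  - intros [-> ->]; split.
    + apply (isNE_mrev_le0 _ _ _ _ _ _ HNE); lra.
    + apply (isNE_mrev_le0 _ _ _ _ _ _ (isNE_swap _ _ _ _ _ _ HNE)); lra.
  - intros [Hm1 Hm2].
    destruct (Req_dec x1 l1) as [E1 | N1].
    { split; [exact E1|].
      apply (isNE_rival_at_lower_bound B1 B2 l1 l2 x1 x2); first [exact HNE | lra]. }
    destruct (Req_dec x2 l2) as [E2 | N2].
    { split; [|exact E2].
      apply (isNE_rival_at_lower_bound B2 B1 l2 l1 x2 x1);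
        first [exact (isNE_swap _ _ _ _ _ _ HNE) | lra]. }
    exfalso.
    assert (0 <= mrev B1 B2 x1 x2) by (apply (isNE_mrev_ge0 _ _ _ _ _ _ HNE); lra).
    assert (0 <= mrev B2 B1 x2 x1)
      by (apply (isNE_mrev_ge0 _ _ _ _ _ _ (isNE_swap _ _ _ _ _ _ HNE)); lra).
    assert (mrev B1 B2 x1 x2 + mrev B2 B1 x2 x1 = (2 - a) * mSW (B1 + B2) (x1 + x2))
      by (apply mrev_sum; lra).
    assert (mSW (B1 + B2) (x1 + x2) < 0) by (apply mSW_neg; lra).
    nra.
Qed.

Theorem SW_NE_above_sopt B1 B2 l1 l2 x1 x2 Mwo Mw : 0 <= l1 < B1 -> 0 <= l2 < B2 ->
  sopt (B1 + B2) < l1 + l2 ->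
  is_max_SW a Nm Nf R0 lamS B1 B2 0 0 Mwo -> is_max_SW a Nm Nf R0 lamS B1 B2 l1 l2 Mw ->
  isNE B1 B2 l1 l2 x1 x2 ->
  SW a Nm Nf R0 lamS B1 B2 x1 x2 <= Mw /\ Mw < Mwo /\
  (SW a Nm Nf R0 lamS B1 B2 x1 x2 = Mw <-> mrev B1 B2 l1 l2 <= 0 /\ mrev B2 B1 l2 l1 <= 0).
Proof.
  intros Hl1 Hl2 Hl Hwo Hw HNE; pose proof HNE as [HF _].
  assert (0 < sopt (B1 + B2) < B1 + B2) by (apply sopt_bounds; lra).
  assert (Hbound : SW a Nm Nf R0 lamS B1 B2 x1 x2 <= Mw) by (apply Hw; exact HF).
  rewrite SW_SWt in *.
  apply is_max_SW_value in Hwo; [|lra..]; apply is_max_SW_value in Hw; [|lra..].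
  rewrite Rplus_0_r, Rmax_right in Hwo by lra; rewrite Rmax_left in Hw by lra.
  rewrite <- (isNE_lower_bounds_iff B1 B2 l1 l2 x1 x2 Hl1 Hl2 Hl HNE), Hw.
  destruct HF as [F1 F2]; split; [|split].
  - lra.
  - rewrite Hwo; apply SWt_lt_sopt; lra.
  - split; [|intros [-> ->]; reflexivity].
    intros Heq; destruct (Req_dec (x1 + x2) (l1 + l2)) as [E|N]; [split; lra | exfalso].
    assert (HsB : x1 + x2 < B1 + B2) by (eapply isNE_sum_lt_total; [| | exact HNE]; lra).
    assert (SWt (B1 + B2) (x1 + x2) < SWt (B1 + B2) (l1 + l2)) by (apply SWt_decreasing; lra).
    lra.
Qed.

Theorem SW_NE_below_sopt B1 B2 l1 l2 x1 x2 Mwo Mw : 0 <= l1 < B1 -> 0 <= l2 < B2 ->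
  l1 + l2 <= sopt (B1 + B2) ->
  is_max_SW a Nm Nf R0 lamS B1 B2 0 0 Mwo -> is_max_SW a Nm Nf R0 lamS B1 B2 l1 l2 Mw ->
  isNE B1 B2 l1 l2 x1 x2 ->
  SW a Nm Nf R0 lamS B1 B2 x1 x2 <= Mw /\ Mw = Mwo /\
  (SW a Nm Nf R0 lamS B1 B2 x1 x2 = Mwo <->
     l1 <= kappa * (B1 - l1) /\ l2 <= kappa * (B2 - l2)).
Proof.
  intros Hl1 Hl2 Hl Hwo Hw HNE; pose proof HNE as [HF _].
  assert (0 < sopt (B1 + B2) < B1 + B2) by (apply sopt_bounds; lra).
  assert (Hbound : SW a Nm Nf R0 lamS B1 B2 x1 x2 <= Mw) by (apply Hw; exact HF).
  rewrite SW_SWt in *.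
  apply is_max_SW_value in Hwo; [|lra..]; apply is_max_SW_value in Hw; [|lra..].
  rewrite Rplus_0_r, Rmax_right in Hwo by lra; rewrite Rmax_right in Hw by lra.
  rewrite <- (isNE_sum_sopt_iff B1 B2 l1 l2 x1 x2 Hl1 Hl2 Hl HNE), Hwo.
  destruct HF as [F1 F2]; split; [lra | split; [lra|]].
  split; [|intros ->; reflexivity].
  intros Heq; destruct (Req_dec (x1 + x2) (sopt (B1 + B2))) as [E|N]; [exact E | exfalso].
  assert (SWt (B1 + B2) (x1 + x2) < SWt (B1 + B2) (sopt (B1 + B2)))
    by (apply SWt_lt_sopt; lra).
  lra.
Qed.

End Equilibrium.

Theorem theorem6
  (alpha Nm Nf R0 lamS B1o B2o B B1n B2n : R)
  (Halpha : 0 < alpha < 1) (HNm : 0 < Nm) (HNf : 0 < Nf) (HR0 : 0 < R0)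
  (HlamS : 1 < lamS) (HB1o : 0 < B1o) (HB2o : 0 < B2o)
  (HB : 0 <= B) (HB1n : 0 <= B1n) (HB2n : 0 <= B2n) (Hsplit : B1n + B2n = B)
  (SWwo SWw xNE1 xNE2 : R)
  (Hwo : is_max_SW alpha Nm Nf R0 lamS (B1o + B1n) (B2o + B2n) 0 0 SWwo)
  (Hw : is_max_SW alpha Nm Nf R0 lamS (B1o + B1n) (B2o + B2n) B1n B2n SWw)
  (HNE : isNE alpha Nm Nf R0 lamS (B1o + B1n) (B2o + B2n) B1n B2n xNE1 xNE2) :
  let SWNE := SW alpha Nm Nf R0 lamS (B1o + B1n) (B2o + B2n) xNE1 xNE2 in
  let T := (B1o + B2o) * Nf * eps alpha lamS / Nm in
  (T < B ->
     SWNE <= SWw /\ SWw < SWwo /\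
     (SWNE = SWw <->
        (dSi alpha Nm Nf R0 lamS B1o B2o B1n B2n B1o B1n <= 0 /\
         dSi alpha Nm Nf R0 lamS B1o B2o B1n B2n B2o B2n <= 0))) /\
  (B <= T ->
     SWNE <= SWw /\ SWw = SWwo /\
     (SWNE = SWwo <->
        (B - B2o * Nf * eps alpha lamS / Nm <= B1n /\
         B1n <= B1o * Nf * eps alpha lamS / Nm /\ B2n = B - B1n))).
Proof.
  intros SWNE T.
  pose proof (kappa_pos alpha Nm Nf lamS HNm HNf) as Hk.
  set (k := kappa alpha Nm Nf lamS) in *.
  assert (Ek : forall x, x * Nf * eps alpha lamS / Nm = k * x)
    by (intros; unfold k, kappa; field; lra).
  rewrite !Ek; unfold T; rewrite Ek.
  assert (Hl1 : 0 <= B1n < B1o + B1n) by lra; assert (Hl2 : 0 <= B2n < B2o + B2n) by lra.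
  assert (Hfree : B1o + B1n + (B2o + B2n) - (B1n + B2n) = B1o + B2o) by ring.
  split; intros HTB.
  - assert (Hopt : sopt alpha Nm Nf lamS (B1o + B1n + (B2o + B2n)) < B1n + B2n)
      by (rewrite lt_sopt_iff, Hfree by lra; fold k; lra).
    assert (0 < k * (B1o + B2o)) by (apply Rmult_lt_0_compat; lra).
    rewrite dSi_mrev, dSi_swap, dSi_mrev by lra.
    exact (SW_NE_above_sopt alpha Nm Nf R0 lamS Halpha HNm HNf HR0 HlamS
             _ _ _ _ _ _ _ _ Hl1 Hl2 Hopt Hwo Hw HNE).
  - assert (Hopt : B1n + B2n <= sopt alpha Nm Nf lamS (B1o + B1n + (B2o + B2n)))
      by (rewrite le_sopt_iff, Hfree by lra; fold k; lra).
    destruct (SW_NE_below_sopt alpha Nm Nf R0 lamS Halpha HNm HNf HR0 HlamS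
                _ _ _ _ _ _ _ _ Hl1 Hl2 Hopt Hwo Hw HNE) as [Hle [Heq Hiff]].
    split; [exact Hle | split; [exact Heq |]].
    fold SWNE k in Hiff; rewrite Hiff.
    replace (B1o + B1n - B1n) with B1o by ring; replace (B2o + B2n - B2n) with B2o by ring.
    lra.
Qed.
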